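(* The relaxed composition $\uplus$ is not compositional with respect to stable models: there is no binary operation $\bowtie'$ mapping pairs of sets of interpretations to sets of interpretations such that $AS(\mathcal P_1\uplus\mathcal P_2)=AS(\mathcal P_1)\bowtie' AS(\mathcal P_2)$ for all program modules $\mathcal P_1,\mathcal P_2$ for which $\mathcal P_1\uplus\mathcal P_2$ is defined. (For instance, $\mathcal P_1=\langle\{a.\},\emptyset,\{a,b\},\emptyset\rangle$, $\mathcal Q_1=\langle\{a.\ \ \bot\leftarrow a,b.\},\emptyset,\{a,b\},\emptyset\rangle$, $\mathcal P_2=\mathcal Q_2=\langle\{b.\},\emptyset,\{b\},\emptyset\rangle$ satisfy $AS(\mathcal P_1)=AS(\mathcal Q_1)$, $AS(\mathcal P_2)=AS(\mathcal Q_2)$ but $AS(\mathcal P_1\uplus\mathcal P_2)\neq AS(\mathcal Q_1\uplus\mathcal Q_2)$.)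
   Context: A program module is a tuple $\mathcal P=\langle R,I,O,H\rangle$ where $R$ is a finite set of ground rules (normal rules $a\leftarrow b_1,\dots,b_m,not~c_1,\dots,not~c_n$, integrity constraints $\bot\leftarrow b_1,\dots,b_m,not~c_1,\dots,not~c_n$, and choice rules understood via their standard translation into normal rules), $I,O,H$ are pairwise disjoint finite sets of atoms (input, output, hidden atoms), every atom occurring in $R$ belongs to $At(\mathcal P)=I\cup O\cup H$, and no rule of $R$ has its head in $I$. For $M\subseteq At(\mathcal P)$, the reduct $R^M$ is obtained from $R$ by deleting every rule having some $not~c$ in its body with $c\in M$, and deleting all negative literals from the remaining rules. $M$ is a stable model of $\mathcal P$ iff $M$ satisfies all integrity constraints of $R$ and $M$ is the least model of the positive program $R^M\cup\{a.\mid a\in M\cap I\}$ (ignoring constraints). $AS(\mathcal P)$ denotes the set of stable models. Given $\mathcal P_1=\langle R_1,I_1,O_1,H_1\rangle$ and $\mathcal P_2=\langle R_2,I_2,O_2,H_2\rangle$, the relaxed composition $\mathcal P_1\uplus\mathcal P_2$ is defined iff $H_1\cap At(\mathcal P_2)=\emptyset$ and $H_2\cap At(\mathcal P_1)=\emptyset$, and then $\mathcal P_1\uplus\mathcal P_2=\langle R_1\cup R_2,(I_1\cup I_2)\setminus(O_1\cup O_2),O_1\cup O_2,H_1\cup H_2\rangle$. *)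

From Stdlib Require Import List.
From mathcomp Require Import all_boot.
Set Implicit Arguments. Unset Strict Implicit. Unset Printing Implicit Defensive.

Definition atom := nat.

(* Ground rules: normal rules  h <- pos, not neg  and integrity constraints
   bot <- pos, not neg. (Choice rules are syntactic sugar.) *)
Inductive rule : Type :=
  | Normal (h : atom) (pos neg : seq atom)
  | Constraint (pos neg : seq atom).

Definition rule_atoms (r : rule) : seq atom :=
  match r with
  | Normal h pos neg => h :: pos ++ neg
  | Constraint pos neg => pos ++ neg
  end.

Record module : Type := Module {
  rules : seq rule;
  inputs : seq atom;
  outputs : seq atom;
  hidden : seq atom }.

Definition At (P : module) : seq atom := inputs P ++ outputs P ++ hidden P.

Definition disjoint_seq (A B : seq atom) : Prop := forall x, x \in A -> x \notin B.

Definition module_wf (P : module) : Prop :=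
  [/\ disjoint_seq (inputs P) (outputs P),
      disjoint_seq (inputs P) (hidden P),
      disjoint_seq (outputs P) (hidden P),
      (forall r, List.In r (rules P) -> forall x, x \in rule_atoms r -> x \in At P) &
      (forall h pos neg, List.In (Normal h pos neg) (rules P) -> h \notin inputs P)].

Definition interp := atom -> bool.
Definition interp_set := interp -> Prop.

(* The positive program R^M U {a. | a in M /\ I} is "closed" under S. *)
Definition reduct_closed (P : module) (M : interp) (S : atom -> Prop) : Prop :=
  (forall a, a \in inputs P -> M a -> S a) /\
  (forall h pos neg, List.In (Normal h pos neg) (rules P) ->
     (forall c, c \in neg -> ~~ M c) ->
     (forall b, b \in pos -> S b) -> S h).

Definition satisfies_constraints (P : module) (M : interp) : Prop :=
  forall pos neg, List.In (Constraint pos neg) (rules P) ->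
    ~ ((forall b, b \in pos -> M b) /\ (forall c, c \in neg -> ~~ M c)).

Definition least_model_of_reduct (P : module) (M : interp) : Prop :=
  reduct_closed P M (fun x => M x) /\
  (forall S : atom -> Prop, reduct_closed P M S -> forall x, M x -> S x).

Definition AS (P : module) : interp_set := fun M =>
  (forall x, M x -> x \in At P) /\
  satisfies_constraints P M /\ least_model_of_reduct P M.

Definition relaxed_composable (P1 P2 : module) : Prop :=
  disjoint_seq (hidden P1) (At P2) /\ disjoint_seq (hidden P2) (At P1).

Definition relaxed_comp (P1 P2 : module) : module :=
  Module (rules P1 ++ rules P2)
    [seq x <- inputs P1 ++ inputs P2 | x \notin outputs P1 ++ outputs P2]
    (outputs P1 ++ outputs P2)
    (hidden P1 ++ hidden P2).

From mathcomp Require Import all_boot.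
From Stdlib Require Import FunctionalExtensionality PropExtensionality.

Set Implicit Arguments.
Unset Strict Implicit.
Unset Printing Implicit Defensive.

(* If [AS] of a relaxed composition were a function of the stable models of the
   components, two modules with the same stable models would compose with a
   third one into modules with the same stable models.  But adding the
   constraint [bot <- a, b] to the fact [a.] changes no stable model of it
   (its only stable model is [{a}]), while after composing with the fact [b.]
   it kills the stable model [{a, b}]. *)

Lemma not_compositional_of_counterexample (P Q R : module) :
  module_wf P -> module_wf Q -> module_wf R ->
  relaxed_composable P R -> relaxed_composable Q R ->
  AS P = AS Q -> AS (relaxed_comp P R) <> AS (relaxed_comp Q R) ->
  ~ exists join' : interp_set -> interp_set -> interp_set,
      forall P1 P2 : module,
        module_wf P1 -> module_wf P2 -> relaxed_composable P1 P2 ->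
        AS (relaxed_comp P1 P2) = join' (AS P1) (AS P2).
Proof.
move=> wfP wfQ wfR compPR compQR ASPQ neqPQR [join' Hjoin].
by apply: neqPQR; rewrite !Hjoin // ASPQ.
Qed.

Lemma module_wf_outputs (R : seq rule) (O : seq atom) :
  (forall r, List.In r R -> forall x, x \in rule_atoms r -> x \in O) ->
  module_wf (Module R [::] O [::]).
Proof. by move=> HR; split=> // r /HR; rewrite /At cats0. Qed.

Lemma relaxed_composable_no_hidden (R1 R2 : seq rule) (I1 I2 O1 O2 : seq atom) :
  relaxed_composable (Module R1 I1 O1 [::]) (Module R2 I2 O2 [::]).
Proof. by []. Qed.

Lemma AS_supported (P : module) (M : interp) x :
  AS P M -> M x -> x \in inputs P \/ exists pos neg, List.In (Normal x pos neg) (rules P).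
Proof.
move=> [_ [_ [_ Hleast]]]; apply: (Hleast (fun y => y \in inputs P \/
  exists pos neg, List.In (Normal y pos neg) (rules P))).
by split=> [a Ha _|h pos neg Hr _ _]; [left | right; exists pos, neg].
Qed.

Definition add_constraint (P : module) (pos neg : seq atom) : module :=
  Module (rules P ++ [:: Constraint pos neg]) (inputs P) (outputs P) (hidden P).

Lemma reduct_closed_add_constraint (P : module) pos neg M (S : atom -> Prop) :
  reduct_closed (add_constraint P pos neg) M S <-> reduct_closed P M S.
Proof.
have Hnormal h p n :
    List.In (Normal h p n) (rules (add_constraint P pos neg)) <-> List.In (Normal h p n) (rules P).
  by rewrite /= List.in_app_iff; split=> [[|[|[]]]|]; [| |left].
by split=> [[HI HR]|[HI HR]]; split=> // h p n /Hnormal; [apply: HR | apply: HR].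
Qed.

Lemma AS_add_constraint (P : module) (pos neg : seq atom) :
  (forall M, AS P M ->
     ~ ((forall b, b \in pos -> M b) /\ (forall c, c \in neg -> ~~ M c))) ->
  AS (add_constraint P pos neg) = AS P.
Proof.
move=> Hinactive; apply: functional_extensionality => M.
have Hleast : least_model_of_reduct (add_constraint P pos neg) M <->
              least_model_of_reduct P M.
  rewrite /least_model_of_reduct reduct_closed_add_constraint.
  split=> -[HM Hmin]; split=> // S /reduct_closed_add_constraint HS;
  exact: Hmin.
apply: propositional_extensionality; split.
- move=> [HAt [Hcons /Hleast HM]]; split=> //; split=> // p n Hin.
  by apply: Hcons; rewrite /= List.in_app_iff; left.
- move=> HAS; have [HAt [Hcons /Hleast HM]] := HAS; split=> //; split=> // p n.
  rewrite /= List.in_app_iff => -[/Hcons //|[[<- <-]|[]]].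
  exact: Hinactive.
Qed.

(* The atoms [a] and [b] are encoded as [0] and [1]. *)
Definition fact_a : module := Module [:: Normal 0 [::] [::]] [::] [:: 0; 1] [::].
Definition fact_a_no_ab : module := add_constraint fact_a [:: 0; 1] [::].
Definition fact_b : module := Module [:: Normal 1 [::] [::]] [::] [:: 1] [::].

Lemma fact_a_wf : module_wf fact_a.
Proof. by apply: module_wf_outputs => r [<-|[]] x; rewrite !inE => ->. Qed.

Lemma fact_a_no_ab_wf : module_wf fact_a_no_ab.
Proof.
apply: module_wf_outputs => r [<-|[<-|[]]] x; rewrite /= !inE //.
by move=> ->.
Qed.

Lemma fact_b_wf : module_wf fact_b.
Proof. by apply: module_wf_outputs => r [<-|[]] x; rewrite !inE => ->. Qed.

Lemma AS_fact_a_no_ab : AS fact_a_no_ab = AS fact_a.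
Proof.
apply: AS_add_constraint => M HM [Hpos _].
have [//|[pos [neg [|[]]]]] := AS_supported HM (Hpos 1 isT).
by case.
Qed.

Definition ab : interp := fun x => (x == 0) || (x == 1).

Lemma ab_AS_fact_a_fact_b : AS (relaxed_comp fact_a fact_b) ab.
Proof.
split; first by move=> x; rewrite /At /ab /= !inE => /orP[] ->; rewrite ?orbT.
split; first by move=> pos neg [|[]].
split; first by split=> // h pos neg [[<- _ _]|[[<- _ _]|[]]].
move=> S [_ HS] x /orP[] /eqP ->; apply: (HS _ [::] [::]) => //; by [left | right; left].
Qed.

Lemma ab_notin_AS_fact_a_no_ab_fact_b : ~ AS (relaxed_comp fact_a_no_ab fact_b) ab.
Proof.
move=> [_ [Hcons _]]; apply: (Hcons [:: 0; 1] [::]); first by right; left.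
by split=> // b; rewrite !inE => /orP[] /eqP ->.
Qed.

Theorem mainTheorem2 :
  ~ exists join' : interp_set -> interp_set -> interp_set,
      forall P1 P2 : module,
        module_wf P1 -> module_wf P2 -> relaxed_composable P1 P2 ->
        AS (relaxed_comp P1 P2) = join' (AS P1) (AS P2).
Proof.
apply: (not_compositional_of_counterexample (R := fact_b)
          fact_a_wf fact_a_no_ab_wf fact_b_wf).
- exact: relaxed_composable_no_hidden.
- exact: relaxed_composable_no_hidden.
- by rewrite AS_fact_a_no_ab.
- move=> Heq; apply: ab_notin_AS_fact_a_no_ab_fact_b.
  by rewrite -Heq; exact: ab_AS_fact_a_fact_b.
Qed.
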